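(* Let $\mathcal{B}$ be a real Banach space, $\mathcal{P}$ a cone over $\mathcal{B}$ with induced partial order $\preceq$, let $\mathcal{Q}$ be a real vector space and $d$ a quasi-cone metric on $\mathcal{Q}$ with values in $\mathcal{B}$. Let $H$ be a non-empty subset of $\mathcal{Q}$. Then $H$ is a backward pseudo Chebyshev subset of $\mathcal{Q}$ if and only if there do not exist $q\in\mathcal{Q}$, infinitely many linearly independent elements $\{h_n\}_{n\in\mathbb{N}}\subseteq H$, and a function $f:\mathcal{Q}\to\mathcal{B}$ such that for all $n\in\mathbb{N}$: $f(h_n)=d(h_n,q)$, $\{f(h)-f(h_n): h\in H\}\subseteq\mathcal{P}$, and $\{d(h,q)-f(h): h\in H\}\subseteq\mathcal{P}$.
   Context: A cone over a real Banach space $\mathcal{B}$ is a subset $\mathcal{P}\subseteq\mathcal{B}$ that is closed, $\mathcal{P}\neq\{0_\mathcal{B}\}$, satisfies $ax+by\in\mathcal{P}$ for all $x,y\in\mathcal{P}$ and $a,b\geq 0$, and such that $x\in\mathcal{P}$ and $-x\in\mathcal{P}$ imply $x=0_\mathcal{B}$. For $r,s\in\mathcal{B}$, $s\preceq r$ means $r-s\in\mathcal{P}$. A quasi-cone metric on a set $\mathcal{Q}$ is a map $d:\mathcal{Q}\times\mathcal{Q}\to\mathcal{B}$ such that for all $r,s,t\in\mathcal{Q}$: $d(r,s)\succeq 0_\mathcal{B}$; $d(r,s)=0_\mathcal{B}$ iff $r=s$; $d(r,t)\preceq d(r,s)+d(s,t)$. For non-empty $H\subseteq\mathcal{Q}$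 and $q\in\mathcal{Q}$, $\mathcal{P}_{H_b}(q)$ is the set of all $h_b\in H$ with $d(h_b,q)\preceq d(h,q)$ for all $h\in H$. A non-empty $H\subseteq\mathcal{Q}$ is a backward pseudo Chebyshev subset of $\mathcal{Q}$ if for every $q\in\mathcal{Q}$ the set $\mathcal{P}_{H_b}(q)$ does not contain infinitely many linearly independent elements. *)

From HB Require Import structures.
From mathcomp Require Import all_boot all_order all_algebra.
From mathcomp Require Import all_classical all_reals all_analysis.
Set Implicit Arguments. Unset Strict Implicit. Unset Printing Implicit Defensive.
Import Order.TTheory GRing.Theory Num.Theory.
Import numFieldNormedType.Exports.
Local Open Scope classical_set_scope.
Local Open Scope ring_scope.

Definition is_cone (R : realType) (B : completeNormedModType R) (P : set B) : Prop :=
  [/\ closed P,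
      P <> [set 0],
      (forall x y, P x -> P y -> forall a b : R, 0 <= a -> 0 <= b -> P (a *: x + b *: y))
    & (forall x, P x -> P (- x) -> x = 0)].

Definition cone_le (R : realType) (B : completeNormedModType R) (P : set B) (s r : B) : Prop :=
  P (r - s).

Definition is_quasi_cone_metric (R : realType) (B : completeNormedModType R) (P : set B)
  (Q : Type) (d : Q -> Q -> B) : Prop :=
  [/\ (forall r s, cone_le P 0 (d r s)),
      (forall r s, d r s = 0 <-> r = s)
    & (forall r s t, cone_le P (d r t) (d r s + d s t))].

Definition best_back_approx (R : realType) (B : completeNormedModType R) (P : set B)
  (Q : Type) (d : Q -> Q -> B) (H : set Q) (q : Q) : set Q :=
  [set hb | H hb /\ forall h, H h -> cone_le P (d hb q) (d h q)].

(* A sequence of vectors is linearly independent: every finite initial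
   family is free (hence every finite subfamily is free). *)
Definition lin_indep_seq (R : realType) (Q : lmodType R) (h : nat -> Q) : Prop :=
  forall (n : nat) (c : 'I_n -> R),
    \sum_(i < n) c i *: h i = 0 -> forall i, c i = 0.

Definition has_inf_lin_indep (R : realType) (Q : lmodType R) (S : set Q) : Prop :=
  exists h : nat -> Q, (forall n, S (h n)) /\ lin_indep_seq h.

Definition backward_pseudo_chebyshev (R : realType) (B : completeNormedModType R)
  (P : set B) (Q : lmodType R) (d : Q -> Q -> B) (H : set Q) : Prop :=
  H !=set0 /\ forall q : Q, ~ has_inf_lin_indep (best_back_approx P d H q).

From HB Require Import structures.
From mathcomp Require Import all_boot all_order all_algebra.
From mathcomp Require Import all_classical all_reals all_analysis.
Import Order.TTheory GRing.Theory Num.Theory.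
Import numFieldNormedType.Exports.
Set Implicit Arguments. Unset Strict Implicit. Unset Printing Implicit Defensive.
Local Open Scope classical_set_scope.
Local Open Scope ring_scope.

(* A function [f] sandwiched as [f (h_n) <= f <= d(., q)] on [H] with
   [f (h_n) = d (h_n, q)] forces [d (h_n, q) <= d (h, q)] for every [h] in [H];
   conversely [f := d(., q)] is such a function for every best backward
   approximation.  So the sequences of the right-hand side are exactly the
   sequences of best backward approximations. *)

Section ConeOrder.
Variables (R : realType) (B : completeNormedModType R) (P : set B).
Hypothesis coneP : is_cone P.

Lemma cone_addr_closed (x y : B) : P x -> P y -> P (x + y).
Proof.
case: coneP => _ _ combP _ Px Py.
by have := combP _ _ Px Py 1 1 ler01 ler01; rewrite !scale1r.
Qed.

Lemma cone_le_trans (x y z : B) : cone_le P x y -> cone_le P y z -> cone_le P x z.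
Proof.
rewrite /cone_le => Pxy Pyz.
by have := cone_addr_closed Pyz Pxy; rewrite addrA subrK.
Qed.

End ConeOrder.

Lemma quasi_cone_metric_cone0 (R : realType) (B : completeNormedModType R)
    (P : set B) (Q : lmodType R) (d : Q -> Q -> B) :
  is_quasi_cone_metric P d -> P 0.
Proof.
case=> d_ge0 d_eq0 _.
by have := d_ge0 0 0; rewrite /cone_le (proj2 (d_eq0 0 0)) // subr0.
Qed.

Section BestBackwardApproximation.
Variables (R : realType) (B : completeNormedModType R) (P : set B).
Variables (Q : Type) (d : Q -> Q -> B) (H : set Q) (q : Q).

Lemma best_back_approx_sandwich (f : Q -> B) (hb : Q) :
  is_cone P -> H hb -> f hb = d hb q ->
  (forall x, H x -> P (f x - f hb)) -> (forall x, H x -> P (d x q - f x)) ->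
  best_back_approx P d H q hb.
Proof.
move=> coneP Hhb fhb f_ge f_le; split=> // x Hx.
by rewrite -fhb; apply: (cone_le_trans coneP (f_ge x Hx) (f_le x Hx)).
Qed.

Lemma best_back_approx_lower (hb : Q) (x : Q) :
  best_back_approx P d H q hb -> H x -> P (d x q - d hb q).
Proof. by case=> _ hb_min /hb_min. Qed.

End BestBackwardApproximation.

Theorem theorem8 (R : realType) (B : completeNormedModType R) (P : set B)
  (Q : lmodType R) (d : Q -> Q -> B) (H : set Q) :
  is_cone P -> is_quasi_cone_metric P d -> H !=set0 ->
  (backward_pseudo_chebyshev P d H <->
   ~ (exists (q : Q) (h : nat -> Q) (f : Q -> B),
        (forall n, H (h n)) /\ lin_indep_seq h /\
        (forall n, f (h n) = d (h n) q /\
                   (forall x, H x -> P (f x - f (h n))) /\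
                   (forall x, H x -> P (d x q - f x))))).
Proof.
move=> coneP dP Hne; split.
- move=> [_ cheb] [q [h [f [Hh [h_indep f_sandwich]]]]].
  apply: (cheb q); exists h; split=> // n.
  have [fhn [f_ge f_le]] := f_sandwich n.
  exact: best_back_approx_sandwich coneP (Hh n) fhn f_ge f_le.
- move=> no_sandwich; split=> // q [h [h_best h_indep]].
  apply: no_sandwich; exists q, h, (fun x => d x q).
  split; first by move=> n; case: (h_best n).
  split=> // n; split=> //; split; first by move=> x; apply: best_back_approx_lower (h_best n).
  by move=> x _; rewrite subrr; apply: quasi_cone_metric_cone0 dP.
Qed.
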